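(* Let $G$ be an étale locally compact Hausdorff groupoid with unit space $G^{(0)}$, and let $\Sigma \rightarrow G$ be a twist over $G$. Then for each $f \in \ell^2(\Sigma; G)$ the function on $G^{(0)}$ defined by $$x \mapsto \max \left\{ \sum_{\gamma \in G_x} |f(\gamma)|^2,\ \sum_{\gamma \in G^x} |f(\gamma)|^2\right\}^{1/2}$$ is continuous.
   Context: A twist $\Sigma\rightarrow G$ is a locally trivial central extension $\mathbb{T}\times G^{(0)} \to \Sigma \to G$ of groupoids. It determines a complex line bundle $L=(\mathbb{C}\times\Sigma)/\sim$ over $G$, where $(z_1,\sigma_1)\sim(z_2,\sigma_2)$ iff $(z_1,\sigma_1)=(\overline{\lambda}z_2,\lambda\cdot\sigma_2)$ for some $\lambda\in\mathbb{T}$; the absolute value $|[z,\sigma]|=|z|$ is well defined. $C_c(\Sigma;G)$ denotes the continuous compactly supported sections $G\to L$. For $x\in G^{(0)}$, $G_x=\{\gamma: s(\gamma)=x\}$ and $G^x=\{\gamma: r(\gamma)=x\}$. The $2$-norm on $C_c(\Sigma;G)$ is $\|f\|_2=\sup_{x\in G^{(0)}}\max\{\sum_{\gamma\in G_x}|f(\gamma)|^2,\sum_{\gamma\in G^x}|f(\gamma)|^2\}^{1/2}$, and $\ell^2(\Sigma;G)$ is the completion of $C_c(\Sigma;G)$ in $\|\cdot\|_2$, realized as a space of continuous sections of $L$ (the $2$-norm dominates the sup-norm). *)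

From HB Require Import structures.
From mathcomp Require Import all_boot all_order all_algebra.
From mathcomp Require Import all_classical all_reals all_analysis.
Set Implicit Arguments. Unset Strict Implicit. Unset Printing Implicit Defensive.
Import Order.TTheory GRing.Theory Num.Theory.
Import numFieldNormedType.Exports.
Local Open Scope classical_set_scope.
Local Open Scope ring_scope.

(** Complex numbers are modelled as [R * R] (product topology). *)
Definition cmul (R : realType) (a b : R * R) : R * R :=
  (a.1 * b.1 - a.2 * b.2, a.1 * b.2 + a.2 * b.1).
Definition cconj (R : realType) (a : R * R) : R * R := (a.1, - a.2).
Definition csub (R : realType) (a b : R * R) : R * R := (a.1 - b.1, a.2 - b.2).
Definition cabs2 (R : realType) (a : R * R) : R := a.1 ^+ 2 + a.2 ^+ 2.
Definition czero (R : realType) : R * R := (0, 0).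
Definition circle (R : realType) : set (R * R) := [set z | cabs2 z = 1].

(** Groupoid operations (composition is total, only meaningful on composable pairs). *)
Record groupoid (G : Type) := Groupoid {
  src : G -> G; rng : G -> G; mul : G -> G -> G; inv : G -> G }.

Definition units (G : Type) (g : groupoid G) : set G := range (src g).

Definition is_groupoid (G : Type) (g : groupoid G) : Prop :=
  [/\ (forall x, src g (src g x) = src g x /\ rng g (src g x) = src g x
                 /\ src g (rng g x) = rng g x /\ rng g (rng g x) = rng g x),
      (forall x y, src g x = rng g y ->
          src g (mul g x y) = src g y /\ rng g (mul g x y) = rng g x),
      (forall x y z, src g x = rng g y -> src g y = rng g z ->
          mul g (mul g x y) z = mul g x (mul g y z)),
      (forall x, mul g (rng g x) x = x /\ mul g x (src g x) = x) &
      (forall x, src g (inv g x) = rng g x /\ rng g (inv g x) = src g x /\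
          mul g x (inv g x) = rng g x /\ mul g (inv g x) x = src g x)].

Definition is_top_groupoid (G : topologicalType) (g : groupoid G) : Prop :=
  [/\ is_groupoid g, continuous (src g), continuous (rng g), continuous (inv g) &
      {within [set p : G * G | src g p.1 = rng g p.2],
         continuous (fun p => mul g p.1 p.2)}].

Definition local_homeo (G : topologicalType) (f : G -> G) : Prop :=
  continuous f /\
  forall x, exists U : set G, [/\ open U, U x,
     (forall a b, U a -> U b -> f a = f b -> a = b) &
     (forall V, open V -> V `<=` U -> open (f @` V))].

Definition etale_lch_groupoid (G : topologicalType) (g : groupoid G) : Prop :=
  [/\ is_top_groupoid g, hausdorff_space G, locally_compact [set: G] &
      local_homeo (rng g)].

(** Twist data: the quotient map [tpi : Sigma -> G] and the inclusion
    [tiota : T x Sigma^(0) -> Sigma] (unit spaces identified via [tpi]). *)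
Record twist_data (R : realType) (G S : Type) := TwistData {
  tpi : S -> G; tiota : R * R -> S -> S }.

Definition is_twist (R : realType) (G S : topologicalType)
  (gG : groupoid G) (gS : groupoid S) (t : twist_data R G S) : Prop :=
  let pi := tpi t in let io := fun p : (R * R) * S => tiota t p.1 p.2 in
  let D := [set p : (R * R) * S | circle p.1 /\ units gS p.2] in
  is_top_groupoid gS /\
      [/\ continuous pi, (forall A, open A -> open (pi @` A)),
          (forall y, exists s, pi s = y),
          (forall s, src gG (pi s) = pi (src gS s) /\ rng gG (pi s) = pi (rng gS s)) &
          (forall s u, src gS s = rng gS u -> pi (mul gS s u) = mul gG (pi s) (pi u))] /\
      [/\ (forall a b, units gS a -> units gS b -> pi a = pi b -> a = b),
          pi @` units gS = units gG &
          (forall A, open A -> exists B, open B /\ pi @` (A `&` units gS) = B `&` units gG)] /\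
      [/\ (forall l u, circle l -> units gS u ->
              src gS (tiota t l u) = u /\ rng gS (tiota t l u) = u),
          (forall l m u, circle l -> circle m -> units gS u ->
              tiota t (cmul l m) u = mul gS (tiota t l u) (tiota t m u)),
          (forall p q, D p -> D q -> io p = io q -> p = q),
          {within D, continuous io} &
          (forall A, open A -> exists B, open B /\
              io @` (A `&` D) = B `&` (pi @^-1` units gG))] /\
      io @` D = pi @^-1` units gG /\
      (forall l s, circle l ->
          mul gS (tiota t l (rng gS s)) s = mul gS s (tiota t l (src gS s))) /\
      (forall y, exists U : set G, exists c : G -> S,
          [/\ open U, U y, {within U, continuous c} & forall z, U z -> pi (c z) = z]).

Definition tact (R : realType) (G S : Type) (gS : groupoid S)
  (t : twist_data R G S) (l : R * R) (s : S) : S :=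
  mul gS (tiota t l (rng gS s)) s.

(** Sections of the line bundle L = (C x Sigma)/~ are represented by functions
    F : Sigma -> C with F (l . s) = conj(l) F(s); the section is
    gamma |-> [F s, s] for any s over gamma. *)
Definition is_section (R : realType) (G S : Type) (gS : groupoid S)
  (t : twist_data R G S) (F : S -> R * R) : Prop :=
  forall l s, circle l -> F (tact gS t l s) = cmul (cconj l) (F s).

Local Open Scope ereal_scope.

(** |f(gamma)|^2 (the same for all s over gamma). *)
Definition sabs2 (R : realType) (G S : choiceType) (t : twist_data R G S)
  (F : S -> R * R) (y : G) : \bar R :=
  ereal_sup [set (cabs2 (F s))%:E | s in tpi t @^-1` [set y]].

Definition sum_src (R : realType) (G S : choiceType) (gG : groupoid G)
  (t : twist_data R G S) (F : S -> R * R) (x : G) : \bar R :=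
  \esum_(y in [set y | src gG y = x]) sabs2 t F y.

Definition sum_rng (R : realType) (G S : choiceType) (gG : groupoid G)
  (t : twist_data R G S) (F : S -> R * R) (x : G) : \bar R :=
  \esum_(y in [set y | rng gG y = x]) sabs2 t F y.

Definition norm2sq (R : realType) (G S : choiceType) (gG : groupoid G)
  (t : twist_data R G S) (F : S -> R * R) : \bar R :=
  ereal_sup [set Order.max (sum_src gG t F x) (sum_rng gG t F x) | x in units gG].

Definition Cc_sec (R : realType) (G S : topologicalType) (gS : groupoid S)
  (t : twist_data R G S) (F : S -> R * R) : Prop :=
  [/\ is_section gS t F, continuous F &
      compact (closure (tpi t @` [set s | F s != czero R]))].

Definition l2_sec (R : realType) (G S : topologicalType) (gG : groupoid G)
  (gS : groupoid S) (t : twist_data R G S) (F : S -> R * R) : Prop :=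
  [/\ is_section gS t F, continuous F &
      exists Fn : nat -> S -> R * R, (forall n, Cc_sec gS t (Fn n)) /\
        (fun n => norm2sq gG t (fun s => csub (F s) (Fn n s))) @ \oo --> 0].

(* For a section f of the twist, |f|^2 is constant on the fibres of Sigma -> G, so
   both fibre sums are sums of a nonnegative function on G.  When f is compactly
   supported, its support K meets each range fibre r^-1(x0) in finitely many points,
   because r is a local homeomorphism; near x0 the sum over r^-1(x) is the sum of
   |f|^2 at the local lifts of x through these points, hence continuous in x, and
   source sums are range sums of |f|^2 composed with inversion.  By Minkowski's
   inequality on each fibre, replacing f by an f_n with ||f - f_n||_2 <= e moves the
   function of the theorem by at most e at every unit, and a uniform limit of
   continuous functions is continuous. *)

From Pilot Require Import Defs.
From HB Require Import structures.
From mathcomp Require Import all_boot all_order all_algebra finmap.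
From mathcomp Require Import all_classical all_reals all_analysis.
From mathcomp Require Import ring lra.
Import Order.TTheory GRing.Theory Num.Theory.
Import numFieldNormedType.Exports.
Set Implicit Arguments. Unset Strict Implicit. Unset Printing Implicit Defensive.
Local Open Scope classical_set_scope.
Local Open Scope ring_scope.

Local Notation gmul := Defs.mul.
Local Notation ginv := Defs.inv.

Section ComplexModulus.
Variable R : realType.
Implicit Types a b : R * R.

Lemma cabs2_ge0 a : 0 <= cabs2 a.
Proof. by rewrite addr_ge0 ?sqr_ge0. Qed.

Lemma cabs2_cmul a b : cabs2 (cmul a b) = cabs2 a * cabs2 b.
Proof. rewrite /cabs2 /cmul /=; ring. Qed.

Lemma cabs2_cconj a : cabs2 (cconj a) = cabs2 a.
Proof. by rewrite /cabs2 sqrrN. Qed.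

Lemma cabs2_csubC a b : cabs2 (csub a b) = cabs2 (csub b a).
Proof. rewrite /cabs2 /csub /=; ring. Qed.

Lemma continuous_cabs2 : continuous (@cabs2 R).
Proof.
move=> a; apply: cvgD; apply: cvgM;
  [exact: cvg_fst | exact: cvg_fst | exact: cvg_snd | exact: cvg_snd].
Qed.

Lemma dot_le_sqrt_cabs2 a b :
  a.1 * b.1 + a.2 * b.2 <= Num.sqrt (cabs2 a) * Num.sqrt (cabs2 b).
Proof.
rewrite -sqrtrM ?cabs2_ge0 //; apply: le_trans (ler_norm _) _.
rewrite -sqrtr_sqr ler_wsqrtr //.
(* Lagrange's identity *)
have -> : cabs2 a * cabs2 b = (a.1 * b.1 + a.2 * b.2) ^+ 2 + (a.1 * b.2 - a.2 * b.1) ^+ 2.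
  by rewrite /cabs2; ring.
by rewrite lerDl sqr_ge0.
Qed.

Lemma cabs2_triangle a b :
  cabs2 a <= (Num.sqrt (cabs2 (csub a b)) + Num.sqrt (cabs2 b)) ^+ 2.
Proof.
have := dot_le_sqrt_cabs2 (csub a b) b.
rewrite sqrrD !sqr_sqrtr ?cabs2_ge0 // /cabs2 /csub /=; lra.
Qed.

End ComplexModulus.

Lemma sqrt_le_of_le_sqr (R : rcfType) (p d q : R) : 0 <= d -> 0 <= q ->
  p <= (Num.sqrt d + Num.sqrt q) ^+ 2 -> Num.sqrt p <= Num.sqrt d + Num.sqrt q.
Proof.
move=> d0 q0 /ler_wsqrtr /le_trans; apply.
by rewrite sqrtr_sqr ger0_norm // addr_ge0 // sqrtr_ge0.
Qed.

Section Minkowski.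
Variables (R : realType) (T : choiceType) (a b c : T -> R).
Hypotheses (b0 : forall i, 0 <= b i) (c0 : forall i, 0 <= c i)
  (abc : forall i, a i <= (Num.sqrt (b i) + Num.sqrt (c i)) ^+ 2).

Lemma minkowski_seq (s : seq T) :
  \sum_(i <- s) a i <=
  (Num.sqrt (\sum_(i <- s) b i) + Num.sqrt (\sum_(i <- s) c i)) ^+ 2.
Proof.
elim: s => [|i s IH]; first by rewrite !big_nil sqrtr0 addr0 expr0n.
rewrite !big_cons.
have sum_ge0 (f : T -> R) : (forall j, 0 <= f j) -> 0 <= \sum_(j <- s) f j.
  by move=> f0; apply: sumr_ge0 => j _.
pose u := (Num.sqrt (b i) + Num.sqrt (c i),
  Num.sqrt (\sum_(j <- s) b j) + Num.sqrt (\sum_(j <- s) c j)).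
pose v := (Num.sqrt (c i), Num.sqrt (\sum_(j <- s) c j)).
(* The induction step is Minkowski's inequality in R^2 for u - v and v. *)
have := cabs2_triangle u v.
rewrite /cabs2 /csub /= !addrK !sqr_sqrtr ?sum_ge0 //.
by apply: le_trans; apply: lerD.
Qed.

Lemma minkowski_esum (A : set T) (B C : R) :
  \esum_(i in A) (b i)%:E = B%:E -> \esum_(i in A) (c i)%:E = C%:E ->
  (\esum_(i in A) (a i)%:E <= ((Num.sqrt B + Num.sqrt C) ^+ 2)%:E)%E.
Proof.
move=> eB eC; apply: ge_ereal_sup => _ [X [finX XA] <-].
have sum_le (f : T -> R) (F : R) : (forall i, 0 <= f i) -> \esum_(i in A) (f i)%:E = F%:E ->
    \sum_(i <- fset_set X) f i <= F.
  move=> f0 eF; rewrite -lee_fin -eF -sumEFin -fsbig_finite //.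
  by apply: esum_ge; exists X.
rewrite fsbig_finite //= sumEFin lee_fin; apply: le_trans (minkowski_seq _) _.
apply: lerXn2r; rewrite ?nnegrE ?addr_ge0 ?sqrtr_ge0 //.
by apply: lerD; apply: ler_wsqrtr; apply: sum_le.
Qed.

End Minkowski.

Section Groupoid.
Variables (G : Type) (g : groupoid G).
Hypothesis Hg : is_groupoid g.

Lemma inv_uniq a b : src g a = rng g b -> gmul g a b = rng g a -> b = ginv g a.
Proof.
case: Hg => _ _ mulA unit_mul inv_ax sab mab.
have [inv_src [_ [_ inv_mul]]] := inv_ax a.
rewrite -(proj1 (unit_mul b)) -sab -inv_mul mulA ?mab ?inv_src //.
by rewrite -inv_src (proj2 (unit_mul _)).
Qed.

Lemma invK : involutive (ginv g).
Proof.
move=> x; have [_ _ _ _ inv_ax] := Hg; have [s_inv [r_inv [_ inv_mul]]] := inv_ax x.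
by apply/esym/inv_uniq; rewrite ?inv_mul ?s_inv ?r_inv.
Qed.

Lemma units_src x : units g (src g x).
Proof. by exists x. Qed.

Lemma units_rng x : units g (rng g x).
Proof. by exists (rng g x); case: Hg => /(_ x) [_ [_ []]]. Qed.

End Groupoid.

Section Twist.
Variables (R : realType) (G S : topologicalType) (gG : groupoid G) (gS : groupoid S)
  (t : twist_data R G S).
Hypotheses (HgG : is_groupoid gG) (Ht : is_twist gG gS t).

Lemma tpi_inv s : tpi t (ginv gS s) = ginv gG (tpi t s).
Proof.
case: Ht => [[HgS _ _ _ _] [[_ _ _ pi_sr pi_mul] _]].
have [_ _ _ _ inv_ax] := HgS; have [_ [r_inv [inv_mul _]]] := inv_ax s.
apply: inv_uniq => //; first by rewrite (proj1 (pi_sr s)) (proj2 (pi_sr _)) r_inv.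
by rewrite -pi_mul ?r_inv // inv_mul (proj2 (pi_sr s)).
Qed.

Lemma tpi_fiber_tact s s' : tpi t s = tpi t s' ->
  exists2 l, circle l & s' = tact gS t l s.
Proof.
move=> ess'.
case: Ht => [[HgS _ _ _ _] [[_ _ _ pi_sr pi_mul] [[pi_inj _ _] [[io_sr _ _ _ _] [io_img _]]]]].
have [_ mul_sr mulA unit_mul inv_ax] := HgS.
have [inv_src [inv_rng [_ inv_mul]]] := inv_ax s.
have same_src : src gS s' = src gS s.
  apply: pi_inj; [exact: units_src.. |].
  by rewrite -(proj1 (pi_sr s)) -(proj1 (pi_sr s')) ess'.
have same_rng : rng gS s' = rng gS s.
  apply: pi_inj; [exact: units_rng.. |].
  by rewrite -(proj2 (pi_sr s)) -(proj2 (pi_sr s')) ess'.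
pose w := gmul gS s' (ginv gS s).
have cw : src gS s' = rng gS (ginv gS s) by rewrite inv_rng same_src.
have : (tpi t @^-1` units gG) w.
  rewrite /= /w pi_mul // tpi_inv -ess'.
  have [_ _ _ _ /(_ (tpi t s)) [_ [_ [-> _]]]] := HgG; exact: units_rng.
rewrite -io_img => -[[l u] [/= cl uu] /= wE].
exists l => //; rewrite /tact.
have -> : rng gS s = u.
  by rewrite -same_rng -(proj2 (mul_sr _ _ cw)) -/w -wE (proj2 (io_sr _ _ cl uu)).
rewrite wE /w mulA ?inv_src // inv_mul -same_src.
by rewrite (proj2 (unit_mul s')).
Qed.

Lemma section_cabs2_tpi (F : S -> R * R) s s' : is_section gS t F ->
  tpi t s = tpi t s' -> cabs2 (F s') = cabs2 (F s).
Proof.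
move=> secF /tpi_fiber_tact [l cl ->].
by rewrite secF // cabs2_cmul cabs2_cconj cl mul1r.
Qed.

End Twist.

Lemma is_section_csub (R : realType) (G S : Type) (gS : groupoid S)
    (t : twist_data R G S) (F F' : S -> R * R) :
  is_section gS t F -> is_section gS t F' -> is_section gS t (fun s => csub (F s) (F' s)).
Proof.
by move=> secF secF' l s cl; rewrite secF // secF' // /cmul /csub /=; congr pair; ring.
Qed.

Definition sabs2r (R : realType) (G S : choiceType) (t : twist_data R G S)
  (F : S -> R * R) (y : G) : R := fine (sabs2 t F y).

Section SectionModulus.
Variables (R : realType) (G S : topologicalType) (gG : groupoid G) (gS : groupoid S)
  (t : twist_data R G S).
Hypotheses (HgG : is_groupoid gG) (Ht : is_twist gG gS t).
Variable F : S -> R * R.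
Hypothesis secF : is_section gS t F.

Lemma sabs2_tpi s : sabs2 t F (tpi t s) = (cabs2 (F s))%:E.
Proof.
rewrite /sabs2 -[X in _ = X]ereal_sup1; congr ereal_sup.
apply/seteqP; split => [_ [s' /= ess' <-] | _ ->]; last by exists s.
by rewrite /= (section_cabs2_tpi HgG Ht secF (esym ess')).
Qed.

Lemma tpi_surj y : exists s, tpi t s = y.
Proof. by case: Ht => _ [[_ _ + _ _] _]. Qed.

Lemma sabs2r_tpi s : sabs2r t F (tpi t s) = cabs2 (F s).
Proof. by rewrite /sabs2r sabs2_tpi. Qed.

Lemma sabs2E y : sabs2 t F y = (sabs2r t F y)%:E.
Proof. by have [s <-] := tpi_surj y; rewrite sabs2r_tpi sabs2_tpi. Qed.

Lemma sabs2r_ge0 y : 0 <= sabs2r t F y.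
Proof. by have [s <-] := tpi_surj y; rewrite sabs2r_tpi cabs2_ge0. Qed.

Lemma sum_srcE x :
  sum_src gG t F x = \esum_(y in [set y | src gG y = x]) (sabs2r t F y)%:E.
Proof. by apply: eq_esum => y _; rewrite sabs2E. Qed.

Lemma sum_rngE x :
  sum_rng gG t F x = \esum_(y in [set y | rng gG y = x]) (sabs2r t F y)%:E.
Proof. by apply: eq_esum => y _; rewrite sabs2E. Qed.

End SectionModulus.

Section FiberDistance.
Variables (R : realType) (G S : topologicalType) (gG : groupoid G) (gS : groupoid S)
  (t : twist_data R G S).
Hypotheses (HgG : is_groupoid gG) (Ht : is_twist gG gS t).
Variables (F F' : S -> R * R) (A : set G).
Hypotheses (secF : is_section gS t F) (secF' : is_section gS t F').

Local Notation D := (fun s => csub (F s) (F' s)).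
Local Notation "'Sum' f" := (\esum_(y in A) sabs2 t f y) (at level 10).
Local Notation "'SumR' f" := (\esum_(y in A) (sabs2r t f y)%:E) (at level 10).

Lemma esum_sabs2_dist (d : R) : 0 <= d -> (Sum D <= d%:E)%E -> Sum F' \is a fin_num ->
  Sum F \is a fin_num /\
  `|Num.sqrt (fine (Sum F)) - Num.sqrt (fine (Sum F'))| <= Num.sqrt d.
Proof.
have secD := is_section_csub secF secF'.
have SumE f : is_section gS t f -> Sum f = SumR f.
  by move=> secf; apply: eq_esum => y _; rewrite (sabs2E HgG Ht secf).
rewrite !SumE // => d0 Dd finF'.
have Sum_ge0 f : is_section gS t f -> (0 <= SumR f)%E.
  by move=> secf; apply: esum_ge0 => y _; rewrite lee_fin (sabs2r_ge0 HgG Ht secf).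
have finD : SumR D \is a fin_num.
  by rewrite ge0_fin_numE ?Sum_ge0 // (le_lt_trans Dd) ?ltry.
have [triF triF'] : (forall y, sabs2r t F y <=
      (Num.sqrt (sabs2r t D y) + Num.sqrt (sabs2r t F' y)) ^+ 2) /\
    (forall y, sabs2r t F' y <= (Num.sqrt (sabs2r t D y) + Num.sqrt (sabs2r t F y)) ^+ 2).
  split=> y; have [s <-] := tpi_surj Ht y; rewrite !(sabs2r_tpi HgG Ht) //.
    exact: cabs2_triangle.
  by rewrite cabs2_csubC; exact: cabs2_triangle.
have nonneg f := sabs2r_ge0 HgG Ht (F := f).
have leF := minkowski_esum (nonneg _ secD) (nonneg _ secF') triF
  (esym (fineK finD)) (esym (fineK finF')).
have finF : SumR F \is a fin_num.
  by rewrite ge0_fin_numE ?Sum_ge0 // (le_lt_trans leF) ?ltry.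
have leF' := minkowski_esum (nonneg _ secD) (nonneg _ secF) triF'
  (esym (fineK finD)) (esym (fineK finF)).
split=> //; rewrite -[SumR F](fineK finF) lee_fin in leF.
rewrite -[SumR F'](fineK finF') lee_fin in leF'.
have Sum_fine_ge0 f : is_section gS t f -> 0 <= fine (SumR f) by move/Sum_ge0/fine_ge0.
have := sqrt_le_of_le_sqr (Sum_fine_ge0 _ secD) (Sum_fine_ge0 _ secF') leF.
have := sqrt_le_of_le_sqr (Sum_fine_ge0 _ secD) (Sum_fine_ge0 _ secF) leF'.
have : Num.sqrt (fine (SumR D)) <= Num.sqrt d by rewrite ler_wsqrtr // -lee_fin fineK.
by rewrite ler_norml; lra.
Qed.

End FiberDistance.

(* [compact_cover] is stated for pointed spaces; a nonempty [A] provides the point. *)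
Lemma compact_cover_compact (T : topologicalType) (A : set T) :
  compact A -> cover_compact A.
Proof.
have [->|/set0P[x _]] := eqVneq A set0; last first.
  pose Tp : ptopologicalType := HB.pack T (isPointed.Build T x).
  by move=> cA; move: (cA : @compact Tp A); rewrite compact_cover.
by move=> _ I D f _ _; exists fset0.
Qed.

Lemma locally_fine_continuous (R : realType) (T : topologicalType) (f : T -> \bar R) :
  (forall x0, exists2 phi : T -> R,
     phi x @[x --> x0] --> phi x0 & \forall x \near x0, f x = (phi x)%:E) ->
  (forall x, f x \is a fin_num) /\ continuous (fun x => fine (f x)).
Proof.
move=> loc_f; split=> x0; have [phi phi_cont near_f] := loc_f x0.
  by rewrite (nbhs_singleton near_f).
rewrite /continuous_at (nbhs_singleton near_f) /=; apply: cvg_trans phi_cont.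
by apply: near_eq_cvg; apply: filterS near_f => x ->.
Qed.

Lemma near_fset_forall (T : Type) (F : set_system T) (I : choiceType) (D : {fset I})
    (P : I -> T -> Prop) : Filter F ->
  (forall i, i \in D -> \forall x \near F, P i x) -> \forall x \near F, forall i, i \in D -> P i x.
Proof. by move=> FF nP; apply: filterS (filter_bigI FF nP) => x Px i iD; exact: Px. Qed.

Section RangeCharts.
Variables (G : topologicalType) (g : groupoid G) (U : G -> set G).
Hypotheses (U_open : forall c, open (U c)) (U_self : forall c, U c c)
  (U_inj : forall c a b, U c a -> U c b -> rng g a = rng g b -> a = b)
  (U_rng_open : forall c V, open V -> V `<=` U c -> open (rng g @` V)).

(* Outside [rng g @` U c] the lift is the junk value [c]. *)
Definition rng_lift (c x : G) : G := xget c [set y | U c y /\ rng g y = x].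

Lemma rng_liftP c x : (rng g @` U c) x -> U c (rng_lift c x) /\ rng g (rng_lift c x) = x.
Proof.
case=> y Uy <-; have := @xgetPex _ c [set z | U c z /\ rng g z = rng g y].
by apply; exists y.
Qed.

Lemma rng_lift_rng c y : U c y -> rng_lift c (rng g y) = y.
Proof.
move=> Uy; have [Ul rl] := rng_liftP (ex_intro2 _ _ y Uy erefl).
exact: U_inj Ul Uy rl.
Qed.

Lemma nbhs_rng_chart c : nbhs (rng g c) (rng g @` U c).
Proof.
apply: open_nbhs_nbhs; split; first exact: U_rng_open (U_open c) (@subset_refl _ _).
by exists c; first exact: U_self.
Qed.

Lemma rng_lift_cvg c : rng_lift c x @[x --> rng g c] --> c.
Proof.
move=> O; rewrite nbhsE => -[W [W_open Wc] WO].
apply: (@filterS _ (nbhs (rng g c)) _ (rng g @` (W `&` U c))).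
  by move=> _ [y [Wy Uy] <-]; apply: WO; rewrite /= rng_lift_rng.
apply: open_nbhs_nbhs; split; last by exists c.
exact: U_rng_open (openI W_open (U_open c)) (@subIsetr _ _ _).
Qed.

Hypothesis hG : hausdorff_space G.

Lemma near_rng_lift_neq c d : c != d -> rng g c = rng g d ->
  \forall x \near rng g c, rng_lift c x <> rng_lift d x.
Proof.
move=> cd rcd; move: hG; rewrite open_hausdorff => /(_ c d cd).
case=> -[A B] /= [/set_mem Ac /set_mem Bd] [A_open B_open /eqP AB0].
have nA : \forall x \near rng g c, A (rng_lift c x).
  exact: rng_lift_cvg (open_nbhs_nbhs (conj A_open Ac)).
have nB : \forall x \near rng g c, B (rng_lift d x).
  by rewrite rcd; exact: rng_lift_cvg (open_nbhs_nbhs (conj B_open Bd)).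
apply: filterS (filterI nA nB) => x [/= Ax Bx] e.
by rewrite -[False]/(set0 (rng_lift c x)) -AB0; split; rewrite // e.
Qed.

Hypothesis rng_cont : continuous (rng g).
Variable K : set G.
Hypothesis cK : compact K.

Local Notation fiberK x0 := (K `&` [set y | rng g y = x0]).

Lemma finite_fiber_compact x0 : finite_set (fiberK x0).
Proof.
have [D _ KD] := compact_cover_compact cK (fun c _ => U_open c)
  (fun y Ky => ex_intro2 _ _ y Ky (U_self y)).
apply: (@sub_finite_set _ _ (\bigcup_(c in [set` D]) (U c `&` [set y | rng g y = x0]))).
  by move=> y [Ky ry]; have [c Dc Ucy] := KD y Ky; exists c.
apply: bigcup_finite => [|c _]; first exact: finite_fset.
have [->|/set0P[a [Ua ra]]] := eqVneq (U c `&` [set y | rng g y = x0]) set0.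
  exact: finite_set0.
apply: (@sub_finite_set _ _ [set a]); last exact: finite_set1.
by move=> b [Ub rb]; apply: U_inj Ub Ua _; rewrite rb ra.
Qed.

Lemma near_fiber_charts x0 : \forall x \near x0, forall y, K y -> rng g y = x ->
  exists2 c, fiberK x0 c & U c y.
Proof.
set C := K `\` \bigcup_(c in fiberK x0) U c.
have C_compact : compact C.
  by apply: compact_closedI => //; rewrite closedC; apply: bigcup_open => c _.
have rngC_closed : closed (rng g @` C).
  exact/(compact_closed hG)/(continuous_compact (continuous_subspaceT rng_cont)).
have : nbhs x0 (~` (rng g @` C)).
  apply: open_nbhs_nbhs; split; first by rewrite openC.
  by move=> [y [Ky /(_ (ex_intro2 _ _ y (conj Ky _) (U_self y)))]].
apply: filterS => x nC y Ky ryx; apply: contrapT => noU.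
by apply: nC; exists y => //; split=> // -[c].
Qed.

Variables (R : realType) (h : G -> R).
Hypotheses (h_ge0 : forall y, 0 <= h y) (h_cont : continuous h)
  (h_supp : forall y, h y != 0 -> K y).

Lemma esum_rng_fiber_near x0 : \forall x \near x0,
  \esum_(y in [set y | rng g y = x]) (h y)%:E =
  (\sum_(c <- fset_set (fiberK x0)) h (rng_lift c x))%:E.
Proof.
set E := fset_set (fiberK x0).
have E_fiber c : c \in E <-> fiberK x0 c.
  by rewrite /E in_fset_set ?inE //; exact: finite_fiber_compact.
have near_charts : \forall x \near x0, forall c, c \in E -> (rng g @` U c) x.
  by apply: near_fset_forall => c /E_fiber [_ <-]; exact: nbhs_rng_chart.
have near_lifts_neq : \forall x \near x0, forall c, c \in E -> forall d, d \in E ->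
    c != d -> rng_lift c x <> rng_lift d x.
  apply: near_fset_forall => c /E_fiber [_ rc]; apply: near_fset_forall => d /E_fiber [_ rd].
  have [->|cd] := eqVneq c d; first exact: nearW.
  by rewrite -rc; apply: filterS (near_rng_lift_neq cd _) => [x ne _|]; rewrite ?rc ?rd.
apply: filterS (filterI near_charts (filterI near_lifts_neq (near_fiber_charts x0))).
move=> x [in_charts [lifts_neq covered]].
set Q := (rng_lift ^~ x) @` [set` E].
have Q_fiber : Q `<=` [set y | rng g y = x].
  by move=> _ [c cE <-]; exact: (rng_liftP (in_charts c cE)).2.
rewrite (esumID Q) ?(setIidr Q_fiber); last by move=> y _; rewrite lee_fin.
rewrite [X in (_ + X)%E]esum1 ?adde0; last first.
  move=> y [ry Qy]; have [-> //|/h_supp Ky] := eqVneq (h y) 0.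
  have [c [Kc rc] Ucy] := covered y Ky ry; exfalso; apply: Qy.
  by exists c; [exact/E_fiber | rewrite -ry rng_lift_rng].
rewrite esum_image; last first.
  move=> c d /set_mem cE /set_mem dE e; apply: contrapT => /eqP cd.
  exact: lifts_neq c cE d dE cd e.
rewrite esum_fset ?finite_fset //; last by move=> c _; rewrite lee_fin.
by rewrite fsbig_finite ?finite_fset // set_fsetK sumEFin.
Qed.

Lemma continuous_esum_rng_fiber :
  (forall x, \esum_(y in [set y | rng g y = x]) (h y)%:E \is a fin_num) /\
  continuous (fun x => fine (\esum_(y in [set y | rng g y = x]) (h y)%:E)).
Proof.
apply: locally_fine_continuous => x0.
exists (fun x => \sum_(c <- fset_set (fiberK x0)) h (rng_lift c x)); last first.
  exact: esum_rng_fiber_near.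
rewrite big_seq; under eq_cvg do rewrite big_seq.
apply: cvg_big => [|c]; first exact: add_continuous.
rewrite in_fset_set ?inE; last exact: finite_fiber_compact.
case=> _ <-; rewrite (rng_lift_rng (U_self c)).
exact: cvg_comp _ _ (rng_lift_cvg (c := c)) (@h_cont c).
Qed.

End RangeCharts.

Section EtaleFiberSums.
Variables (R : realType) (G : topologicalType) (g : groupoid G).
Hypothesis HG : etale_lch_groupoid g.

Lemma continuous_esum_rng (h : G -> R) (K : set G) :
  (forall y, 0 <= h y) -> continuous h -> compact K -> (forall y, h y != 0 -> K y) ->
  (forall x, \esum_(y in [set y | rng g y = x]) (h y)%:E \is a fin_num) /\
  continuous (fun x => fine (\esum_(y in [set y | rng g y = x]) (h y)%:E)).
Proof.
case: HG => [[_ _ rng_cont _ _] hG _ [_ /choice[U chart]]].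
have U_open c : open (U c) by case: (chart c).
have U_self c : U c c by case: (chart c).
have U_inj c : forall a b, U c a -> U c b -> rng g a = rng g b -> a = b by case: (chart c).
have U_rng_open c V : open V -> V `<=` U c -> open (rng g @` V).
  by case: (chart c) => _ _ _; apply.
move=> h_ge0 h_cont cK h_supp.
exact: (continuous_esum_rng_fiber U_open U_self U_inj U_rng_open hG rng_cont cK h_ge0 h_cont h_supp).
Qed.

Lemma esum_src_fiber (h : G -> \bar R) x :
  \esum_(y in [set y | src g y = x]) h y = \esum_(y in [set y | rng g y = x]) h (ginv g y).
Proof.
have [[Hg _ _ _ _] _ _ _] := HG; have [_ _ _ _ inv_ax] := Hg.
apply: reindex_esum; split=> [y /= <-|a b _ _ /(congr1 (ginv g))|y /= <-].
- by rewrite (proj1 (inv_ax y)).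
- by rewrite !(invK Hg).
- by exists (ginv g y); rewrite ?(invK Hg) //= (proj1 (proj2 (inv_ax y))).
Qed.

Lemma continuous_esum_src (h : G -> R) (K : set G) :
  (forall y, 0 <= h y) -> continuous h -> compact K -> (forall y, h y != 0 -> K y) ->
  (forall x, \esum_(y in [set y | src g y = x]) (h y)%:E \is a fin_num) /\
  continuous (fun x => fine (\esum_(y in [set y | src g y = x]) (h y)%:E)).
Proof.
have [[Hg _ _ inv_cont _] _ _ _] := HG.
move=> h_ge0 h_cont cK h_supp.
have src_rng x : \esum_(y in [set y | src g y = x]) (h y)%:E =
    \esum_(y in [set y | rng g y = x]) ((h \o ginv g) y)%:E := esum_src_fiber _ x.
have hinv_cont : continuous (h \o ginv g).
  by move=> y; exact: continuous_comp (inv_cont y) (h_cont _).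
have invK_compact : compact (ginv g @` K).
  exact: continuous_compact (continuous_subspaceT inv_cont) cK.
have hinv_supp y : (h \o ginv g) y != 0 -> (ginv g @` K) y.
  by move=> /h_supp Ky; exists (ginv g y); rewrite ?(invK Hg).
have [fin cont] := continuous_esum_rng (fun y => h_ge0 _) hinv_cont invK_compact hinv_supp.
split=> [x|]; first by rewrite src_rng.
by under eq_fun do rewrite src_rng.
Qed.

End EtaleFiberSums.

Section CompactlySupportedSection.
Variables (R : realType) (G S : topologicalType) (gG : groupoid G) (gS : groupoid S)
  (t : twist_data R G S).
Hypotheses (HG : etale_lch_groupoid gG) (Ht : is_twist gG gS t).
Variable F : S -> R * R.
Hypothesis HF : Cc_sec gS t F.

Let HgG : is_groupoid gG. Proof. by case: HG => -[]. Qed.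
Let secF : is_section gS t F. Proof. by case: HF. Qed.

Lemma continuous_sabs2r : continuous (sabs2r t F).
Proof.
have [_ F_cont _] := HF; have [_ [_ [_ [_ [_ [_ local_sec]]]]]] := Ht.
move=> y; have [U [c [U_open Uy c_cont tpi_c]]] := local_sec y.
have c_cvg : c x @[x --> y] --> c y.
  have := (subspace_continuousP _ _).1 c_cont y Uy.
  by rewrite within_interior // ((interior_id U).1 U_open).
have near_sabs2r : \forall z \near y, cabs2 (F (c z)) = sabs2r t F z.
  apply: filterS (open_nbhs_nbhs (conj U_open Uy)) => z Uz.
  by rewrite -[in RHS](tpi_c z Uz) (sabs2r_tpi HgG Ht secF).
rewrite /continuous_at -[in sabs2r t F y](tpi_c y Uy) (sabs2r_tpi HgG Ht secF).
apply: cvg_trans (near_eq_cvg near_sabs2r) _.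
exact: cvg_comp _ _ (cvg_comp _ _ c_cvg (@F_cont (c y))) (@continuous_cabs2 R _).
Qed.

Lemma sabs2r_supp y :
  sabs2r t F y != 0 -> closure (tpi t @` [set s | F s != Defs.czero R]) y.
Proof.
have [s <-] := tpi_surj Ht y; rewrite (sabs2r_tpi HgG Ht secF) => F_neq0.
apply: subset_closure; exists s => //=.
by apply: contraNneq F_neq0 => ->; rewrite /cabs2 expr0n addr0.
Qed.

Lemma Cc_fiber_sums :
  [/\ forall x, sum_src gG t F x \is a fin_num,
      continuous (fun x => fine (sum_src gG t F x)),
      forall x, sum_rng gG t F x \is a fin_num &
      continuous (fun x => fine (sum_rng gG t F x))].
Proof.
have [_ _ supp_compact] := HF.
have [src_fin src_cont] := continuous_esum_src HG (sabs2r_ge0 HgG Ht secF)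
  continuous_sabs2r supp_compact sabs2r_supp.
have [rng_fin rng_cont] := continuous_esum_rng HG (sabs2r_ge0 HgG Ht secF)
  continuous_sabs2r supp_compact sabs2r_supp.
split=> [x||x|]; rewrite ?(sum_srcE HgG Ht secF) ?(sum_rngE HgG Ht secF) //.
- by under eq_fun do rewrite (sum_srcE HgG Ht secF).
- by under eq_fun do rewrite (sum_rngE HgG Ht secF).
Qed.

End CompactlySupportedSection.

Lemma sqrtr_max (R : rcfType) (p q : R) :
  Num.sqrt (Num.max p q) = Num.max (Num.sqrt p) (Num.sqrt q).
Proof.
case: (leP p q) => pq; first by rewrite !max_r // ler_wsqrtr.
by rewrite !max_l // ler_wsqrtr // ltW.
Qed.

Lemma dist_max_le (R : realDomainType) (a b c d e : R) :
  `|a - c| <= e -> `|b - d| <= e -> `|Num.max a b - Num.max c d| <= e.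
Proof.
rewrite !ler_norml => /andP[? ?] /andP[? ?].
by case: (leP a b) => ?; case: (leP c d) => ?; apply/andP; split; lra.
Qed.

Lemma continuous_within_of_uniform_approx (R : realType) (T : topologicalType)
    (A : set T) (f : T -> R) :
  (forall e, 0 < e -> exists2 g : T -> R, continuous g & forall x, A x -> `|f x - g x| <= e) ->
  {within A, continuous f}.
Proof.
move=> approx; apply/subspace_continuousP => x0 Ax0; apply/cvgrPdist_le => e e0.
have e3 : 0 < e / 3 by rewrite divr_gt0.
have [g g_cont fg] := approx _ e3.
move/cvgrPdist_le: (g_cont x0) => /(_ _ e3); apply: filterS => x gx Ax.
move: gx (fg x0 Ax0) (fg x Ax); rewrite !ler_norml => /andP[? ?] /andP[? ?] /andP[? ?].
by rewrite /from_subspace; apply/andP; split; lra.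
Qed.

Definition fiber_norm (R : realType) (G S : choiceType) (gG : groupoid G)
  (t : twist_data R G S) (F : S -> R * R) (x : G) : R :=
  Num.sqrt (fine (Order.max (sum_src gG t F x) (sum_rng gG t F x))).

Section FiberNorm.
Variables (R : realType) (G S : topologicalType) (gG : groupoid G) (gS : groupoid S)
  (t : twist_data R G S).
Hypotheses (HG : etale_lch_groupoid gG) (Ht : is_twist gG gS t).

Let HgG : is_groupoid gG. Proof. by case: HG => -[]. Qed.

Lemma fiber_normE (F : S -> R * R) x :
  sum_src gG t F x \is a fin_num -> sum_rng gG t F x \is a fin_num ->
  fiber_norm gG t F x =
  Num.max (Num.sqrt (fine (sum_src gG t F x))) (Num.sqrt (fine (sum_rng gG t F x))).
Proof. by move=> src_fin rng_fin; rewrite /fiber_norm -sqrtr_max -fine_max. Qed.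

Lemma continuous_fiber_norm (F : S -> R * R) : Cc_sec gS t F -> continuous (fiber_norm gG t F).
Proof.
move=> HF; have [src_fin src_cont rng_fin rng_cont] := Cc_fiber_sums HG Ht HF.
have -> : fiber_norm gG t F = fun x => Num.max (Num.sqrt (fine (sum_src gG t F x)))
    (Num.sqrt (fine (sum_rng gG t F x))).
  by apply: funext => x; rewrite fiber_normE.
move=> x; exact: continuous_max (continuous_comp (src_cont x) (@sqrt_continuous _ _))
  (continuous_comp (rng_cont x) (@sqrt_continuous _ _)).
Qed.

Lemma fiber_norm_dist (F F' : S -> R * R) (d : R) :
  is_section gS t F -> Cc_sec gS t F' -> 0 <= d ->
  (norm2sq gG t (fun s => csub (F s) (F' s)) <= d%:E)%E ->
  forall x, units gG x -> `|fiber_norm gG t F x - fiber_norm gG t F' x| <= Num.sqrt d.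
Proof.
move=> secF HF' d0 Dd x ux; have secF' : is_section gS t F' by case: HF'.
have [src_fin' _ rng_fin' _] := Cc_fiber_sums HG Ht HF'.
have /andP[src_le rng_le] : ((sum_src gG t (fun s => csub (F s) (F' s)) x <= d%:E) &&
    (sum_rng gG t (fun s => csub (F s) (F' s)) x <= d%:E))%E.
  by rewrite -ge_max; apply: le_trans Dd; apply: ereal_sup_ubound; exists x.
have [src_fin src_dist] := esum_sabs2_dist HgG Ht secF secF' d0 src_le (src_fin' x).
have [rng_fin rng_dist] := esum_sabs2_dist HgG Ht secF secF' d0 rng_le (rng_fin' x).
by rewrite !fiber_normE //; exact: dist_max_le.
Qed.

End FiberNorm.

Unset Implicit Arguments.
Theorem lemma3p2 (R : realType) (G S : topologicalType)
  (gG : groupoid G) (gS : groupoid S) (t : twist_data R G S)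
  (HG : etale_lch_groupoid gG) (Ht : is_twist gG gS t)
  (F : S -> R * R) (HF : l2_sec gG gS t F) :
  {within units gG, continuous (fun x : G =>
     Num.sqrt (fine (Order.max (sum_src gG t F x) (sum_rng gG t F x))))}.
Proof.
have [secF _ [Fn [Fn_Cc Fn_cvg]]] := HF.
apply: continuous_within_of_uniform_approx => e e0.
have e2_gt0 : (0 < (e ^+ 2)%:E)%E by rewrite lte_fin exprn_gt0.
have /filter_ex[n Fn_close] : \forall n \near \oo,
    (norm2sq gG t (fun s => csub (F s) (Fn n s)) < (e ^+ 2)%:E)%E.
  exact: Fn_cvg _ (open_ereal_lt' e2_gt0).
exists (fiber_norm gG t (Fn n)); first exact (continuous_fiber_norm HG Ht (Fn_Cc n)).
move=> x ux; have := fiber_norm_dist HG Ht secF (Fn_Cc n) (sqr_ge0 e) (ltW Fn_close) ux.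
by rewrite sqrtr_sqr (ger0_norm (ltW e0)); apply.
Qed.
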